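(* Let $G=(V,E)$ be a connected graph and let $v$ be a cut-vertex of $G$ with $v\in\mathrm{core}(G)$. Suppose that for every connected component $C$ of $G-v$, the set $V(C)\cap N(v)$ induces a clique. Then $\gamma(G-v)>\gamma(G)$, i.e. $v\in V^+$.
   Context: All graphs are finite, simple and undirected. A cut-vertex of a connected graph is a vertex whose deletion disconnects the graph. $N(v)$ is the set of neighbors of $v$; $G-v$ is $G$ with $v$ deleted. $\gamma(G)$ is the domination number; a minimum dominating set (mds) is a dominating set of size $\gamma(G)$; $\mathrm{core}(G)$ is the set of vertices in every mds. $V^+=\{v\in V:\gamma(G-v)>\gamma(G)\}$. *)

(* A finite simple graph on vertex type T : finType is a
   symmetric irreflexive relation e : rel T (hypotheses stated in the theorem). *)
From mathcomp Require Import all_boot.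
Set Implicit Arguments.
Unset Strict Implicit.
Unset Printing Implicit Defensive.

Section Graph.
Variables (T : finType) (e : rel T).

Definition induced_rel (S : {set T}) : rel T :=
  fun x y => [&& x \in S, y \in S & e x y].

Definition nbhd (v : T) : {set T} := [set u | e v u].

Definition dominating (S D : {set T}) : bool :=
  (D \subset S) &&
  [forall x in S, (x \in D) || [exists y in D, e x y]].

(* Domination number of G[S]: the minimum size of a dominating set of G[S]
   (S itself is always dominating). *)
Definition gamma_on (S : {set T}) : nat :=
  #|[arg min_(D < S | dominating S D) #|D|]|.

Definition gamma : nat := gamma_on setT.

Definition is_mds (D : {set T}) : bool :=
  dominating setT D && (#|D| == gamma).

Definition core : {set T} := [set v | [forall D : {set T}, is_mds D ==> (v \in D)]].

Definition connected_graph : Prop := forall x y : T, connect e x y.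

Definition del (v : T) : {set T} := [set: T] :\ v.

Definition cut_vertex (v : T) : Prop :=
  exists x y, [/\ x \in del v, y \in del v & ~~ connect (induced_rel (del v)) x y].

Definition comp_del (v x : T) : {set T} :=
  [set y in del v | connect (induced_rel (del v)) x y].

Definition Vplus : {set T} := [set v | gamma < gamma_on (del v)].

End Graph.

From mathcomp Require Import all_boot.
From mathcomp Require Import zify.

(* Suppose gamma(G - v) <= gamma(G); take an mds D of G (so v is in D) and an mds D'
   of G - v.  Adding a neighbour of v to D' dominates G without v, so |D'| >= gamma(G)
   and |D'| > |D - v|.  Hence some component B of G - v has |D' n B| > |D n B|, and
   replacing D' n B by D n B plus a neighbour of v in B gives, by the clique
   condition, a dominating set of G of size <= gamma(G) avoiding v, contradicting
   v in core(G). *)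

Set Implicit Arguments.
Unset Strict Implicit.
Unset Printing Implicit Defensive.

Section Domination.
Variables (T : finType) (e : rel T).

Lemma dominatingP (S D : {set T}) :
  reflect (D \subset S /\ forall x, x \in S -> x \in D \/ exists2 y, y \in D & e x y)
          (dominating e S D).
Proof.
apply: (iffP andP) => [[DS /forallP domD]|[DS domD]].
  split=> // x xS.
  by case/orP: (implyP (domD x) xS) => [|/exists_inP]; [left | right].
split=> //; apply/forallP => x; apply/implyP => /domD[xD|[y yD xy]]; first by rewrite xD.
by apply/orP; right; apply/exists_inP; exists y.
Qed.

Lemma dominating_refl (S : {set T}) : dominating e S S.
Proof. by apply/dominatingP; split=> // x; left. Qed.

Lemma dominating_sub (S D : {set T}) : dominating e S D -> D \subset S.
Proof. by case/andP. Qed.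

Lemma gamma_on_min (S D : {set T}) : dominating e S D -> gamma_on e S <= #|D|.
Proof.
move=> domD; rewrite /gamma_on.
by case: (arg_minnP (fun D : {set T} => #|D|) (dominating_refl S)) => D0 _; apply.
Qed.

Lemma gamma_on_exists (S : {set T}) :
  exists2 D, dominating e S D & #|D| = gamma_on e S.
Proof.
rewrite /gamma_on.
by case: (arg_minnP (fun D : {set T} => #|D|) (dominating_refl S)) => D0 domD0 _; exists D0.
Qed.

Lemma gamma_lt_card_core (v : T) (D : {set T}) :
  v \in core e -> dominating e setT D -> v \notin D -> gamma e < #|D|.
Proof.
move=> /[!inE] /forallP /(_ D) vcore domD; apply: contraNT; rewrite -leqNgt => leDg.
by apply: (implyP vcore); rewrite /is_mds domD eqn_leq leDg gamma_on_min.
Qed.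

End Domination.

Lemma partition_card_ltP (T : finType) (P : {set {set T}}) (S X Y : {set T}) :
  partition P S -> #|X :&: S| < #|Y :&: S| ->
  exists2 B, B \in P & #|X :&: B| < #|Y :&: B|.
Proof.
move=> partP; have cardI Z : #|Z :&: S| = \sum_(B in P) #|Z :&: B|.
  rewrite -sum1_card (eq_bigl (fun x => (x \in S) && (x \in Z))); last first.
    by move=> x; rewrite inE andbC.
  rewrite (set_partition_big_cond _ partP); apply: eq_bigr => B _.
  by rewrite -sum1_card; apply: eq_bigl => x; rewrite inE andbC.
rewrite !cardI => ltXY; apply/exists_inP; apply: contraLR ltXY.
by move=> /exists_inPn leYX; rewrite -leqNgt; apply: leq_sum => B /leYX; rewrite -leqNgt.
Qed.

Lemma card_swap_le (T : finType) (a : T) (B D D' : {set T}) :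
  #|D :&: B| < #|D' :&: B| -> #|a |: ((D' :\: B) :|: (D :&: B))| <= #|D'|.
Proof.
move=> ltB; rewrite -(cardsID B D') cardsU1 cardsU.
by case: (a \notin _) => /=; lia.
Qed.

Section CutVertex.
Variables (T : finType) (e : rel T).
Hypothesis e_sym : symmetric e.
Variable v : T.

Local Notation comp := (comp_del e v).

Lemma comp_del_refl x : x \in del v -> x \in comp x.
Proof. by move=> xv; rewrite inE xv connect0. Qed.

Lemma notin_del_sub (A : {set T}) : A \subset del v -> v \notin A.
Proof. by move/subsetP/(_ v) => sub; apply/negP => /sub; rewrite !inE eqxx. Qed.

Lemma comp_del_sub x : comp x \subset del v.
Proof. by apply/subsetP => y /setIdP[]. Qed.

Lemma comp_del_edge x y z :
  y \in comp x -> z \in del v -> e y z -> z \in comp x.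
Proof.
move=> /setIdP[yv xy] zv yz; rewrite inE zv.
by apply: connect_trans xy (connect1 _); rewrite /induced_rel yv zv yz.
Qed.

Lemma partition_comp_del : partition [set comp x | x in del v] (del v).
Proof.
have sym_ind : connect_sym (induced_rel e (del v)).
  by apply: sym_connect_sym => x y; rewrite /induced_rel e_sym andbCA.
apply: equivalence_partitionP => x y z _ _ _; split; first exact: connect0.
by move=> xy; apply/idP/idP; apply: connect_trans; rewrite // sym_ind.
Qed.

Lemma comp_del_nbhd x :
  connected_graph e -> x \in del v -> exists2 a, a \in comp x & e v a.
Proof.
move=> conn xv; case/connectP: (conn x v) => p.
elim: p x xv => [|y p IHp] x xv /=; first by move=> _ vx; rewrite vx !inE eqxx in xv.
case/andP=> xy yp lastp; have [yv|ny] := eqVneq y v.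
  by exists x; rewrite ?comp_del_refl // e_sym -yv.
have yv : y \in del v by rewrite !inE ny.
have [a ya va] := IHp y yv yp lastp; exists a => //.
case/setIdP: ya => av ya; rewrite inE av.
by apply: connect_trans ya; apply: connect1; rewrite /induced_rel xv yv xy.
Qed.

Lemma dominating_add_nbhd a F :
  e v a -> dominating e (del v) F -> dominating e setT (a |: F).
Proof.
move=> va /dominatingP[_ domF]; apply/dominatingP; split=> [|y _]; first exact: subsetT.
have [->|nyv] := eqVneq y v; first by right; exists a; rewrite ?setU11.
have yv : y \in del v by rewrite !inE nyv.
have [yF|[z zF yz]] := domF y yv; first by left; rewrite setU1r.
by right; exists z; rewrite ?setU1r.
Qed.

(* Inside the component B of x, D still dominates, except that a vertex dominated
   only by v is now dominated by the neighbour a of v, thanks to the clique. *)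
Lemma dominating_swap_comp x a D D' :
  (forall b c, b \in comp x :&: nbhd e v -> c \in comp x :&: nbhd e v -> b != c -> e b c) ->
  a \in comp x -> e v a -> dominating e setT D -> dominating e (del v) D' ->
  dominating e setT (a |: ((D' :\: comp x) :|: (D :&: comp x))).
Proof.
set B := comp x => cliqueB aB va /dominatingP[_ domD] /dominatingP[D'v domD'].
apply/dominatingP; split=> [|y _]; first exact: subsetT.
have [->|nyv] := eqVneq y v; first by right; exists a; rewrite ?setU11.
have yv : y \in del v by rewrite !inE nyv.
have [yB|nyB] := boolP (y \in B).
  have [yD|[z zD yz]] := domD y (in_setT y).
    by left; rewrite !(in_setU1, in_setU, in_setD, in_setI) yD yB !orbT.
  have [zv|nzv] := eqVneq z v.
    have [->|ya] := eqVneq y a; first by left; rewrite setU11.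
    right; exists a; rewrite ?setU11 // cliqueB // in_setI ?aB ?yB inE ?va //.
    by rewrite e_sym -zv.
  have zB : z \in B by apply: comp_del_edge yz; rewrite // !inE nzv.
  by right; exists z; rewrite // !(in_setU1, in_setU, in_setD, in_setI) zD zB !orbT.
have [yD'|[z zD' yz]] := domD' y yv.
  by left; rewrite !(in_setU1, in_setU, in_setD, in_setI) yD' nyB orbT.
have zB : z \notin B.
  by apply: contra nyB => zB; apply: comp_del_edge zB yv _; rewrite e_sym.
by right; exists z; rewrite // !(in_setU1, in_setU, in_setD, in_setI) zD' zB orbT.
Qed.

End CutVertex.

Theorem lemma2 (T : finType) (e : rel T)
    (e_sym : symmetric e) (e_irr : irreflexive e)
    (conn : connected_graph e) (v : T)
    (hcut : cut_vertex e v) (hcore : v \in core e)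
    (hclique : forall x, x \in del v ->
        forall a b, a \in comp_del e v x :&: nbhd e v ->
                    b \in comp_del e v x :&: nbhd e v -> a != b -> e a b) :
  gamma_on e (del v) > gamma e /\ v \in Vplus e.
Proof.
suff ltg : gamma e < gamma_on e (del v) by split; rewrite ?inE.
have [D' domD' cardD'] := gamma_on_exists e (del v).
have D'v := dominating_sub domD'.
have le_gD' : gamma e <= #|D'|.
  have [x0 [_ [x0v _ _]]] := hcut; have [a a0 va] := comp_del_nbhd e_sym conn x0v.
  have vaD' : v \notin a |: D'.
    by apply: notin_del_sub; rewrite subUset sub1set (subsetP (comp_del_sub e v x0)).
  have := gamma_lt_card_core hcore (dominating_add_nbhd va domD') vaD'.
  by rewrite cardsU1; case: (_ \notin _) => /=; lia.
rewrite ltnNge; apply/negP => le_D'g.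
have [D domD cardD] := gamma_on_exists e setT.
have vD : v \in D.
  by apply: contraT => /(gamma_lt_card_core hcore domD); rewrite cardD ltnn.
have : #|D :&: del v| < #|D' :&: del v|.
  have -> : D :&: del v = D :\ v by apply/setP => y; rewrite !inE andbT andbC.
  rewrite (setIidPl D'v).
  by rewrite /gamma -cardD (cardsD1 v D) vD add1n in le_gD'.
case/(partition_card_ltP (partition_comp_del e_sym v)) => _ /imsetP[x xv ->] ltB.
have [b bB vb] := comp_del_nbhd e_sym conn xv.
have domE := dominating_swap_comp e_sym (hclique x xv) bB vb domD domD'.
have vE : v \notin b |: ((D' :\: comp_del e v x) :|: (D :&: comp_del e v x)).
  apply: notin_del_sub; rewrite !subUset sub1set (subsetP (comp_del_sub e v x)) //.
  rewrite (subset_trans (subsetDl _ _) D'v).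
  exact: subset_trans (subsetIr _ _) (comp_del_sub e v x).
have := gamma_lt_card_core hcore domE vE.
by rewrite ltnNge (leq_trans (card_swap_le b ltB)) // cardD'.
Qed.
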